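(* Every $M_1\in GL_n(\mathbb{C}(\{z-1\}))$ can be written $M_1=C^{(1)}R^{(1)}$ where $R^{(1)}\in GL_n(\mathbb{C}(\{z-1\}))$ is regular at $1$ and $C^{(1)}\in GL_n(\mathbb{C}(z))$ is regular at $0$ and $\infty$ and of the form $C^{(1)}=u^{-k}T_{i_1,\underline{l_1}}D_{i_1,u}\cdots T_{i_r,\underline{l_r}}D_{i_r,u}$ with $k\in\mathbb{N}$, $r\in\mathbb{N}$, $i_1,\dots,i_r\in\{1,\dots,n\}$, $\underline{l_1},\dots,\underline{l_r}\in\mathbb{C}^n\setminus\{0\}$ and $u=\frac{z-1}{z+1}$.
   Context: $\mathbb{C}(\{z-1\})$ is the field of convergent Laurent series at $1$. A matrix is regular at $x\in\mathbb{C}$ if its entries are analytic at $x$ and its value at $x$ is invertible; regular at $\infty$ if $A(1/z)$ is regular at $0$. $D_{i,u}$ denotes the $n\times n$ identity matrix whose $(i,i)$ entry is replaced by $u$; for $\underline{l}=(l_1,\dots,l_n)$, $T_{i,\underline{l}}$ denotes the $n\times n$ identity matrix whose $i$-th row is replaced by $\underline{l}$. *)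

From HB Require Import structures.
From mathcomp Require Import all_boot all_order all_algebra.
From mathcomp Require Import complex.
From mathcomp Require Import reals.
Set Implicit Arguments. Unset Strict Implicit. Unset Printing Implicit Defensive.
Import Order.TTheory GRing.Theory Num.Theory.
Local Open Scope ring_scope.
Local Open Scope complex_scope.

Section Defs.
Variable R : realType.
Local Notation C := R[i].
Variable n : nat.

Definition ps_conv (a : nat -> C) (w s : C) : Prop :=
  forall e : R, 0 < e -> exists N : nat, forall m : nat, (N <= m)%N ->
    `|\sum_(k < m) a k * w ^+ k - s| < e%:C.

Definition analytic_at (x : C) (f : C -> C) : Prop :=
  exists (r : R) (a : nat -> C), 0 < r /\
    forall z : C, `|z - x| < r%:C -> ps_conv a (z - x) (f z).

(* f represents an element of C({z-x}), the field of convergent Laurent series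
   at x (i.e. a meromorphic germ at x): on a punctured disc around x,
   (z-x)^m f(z) is given by a convergent power series. *)
Definition laurent_at (x : C) (f : C -> C) : Prop :=
  exists (m : nat) (r : R) (a : nat -> C), 0 < r /\
    forall z : C, 0 < `|z - x| < r%:C -> ps_conv a (z - x) ((z - x) ^+ m * f z).

(* Equality of germs at x: equality on some punctured disc around x
   (this is equality in C({z-x})). *)
Definition germ_eq (x : C) (A B : C -> 'M[C]_n) : Prop :=
  exists r : R, 0 < r /\ forall z : C, 0 < `|z - x| < r%:C -> A z = B z.

Definition GL_laurent (x : C) (A : C -> 'M[C]_n) : Prop :=
  (forall i j, laurent_at x (fun z => A z i j)) /\
  exists B : C -> 'M[C]_n, (forall i j, laurent_at x (fun z => B z i j)) /\
    germ_eq x (fun z => A z *m B z) (fun _ => 1%:M).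

Definition regular_at (x : C) (A : C -> 'M[C]_n) : Prop :=
  exists B : C -> 'M[C]_n, germ_eq x A B /\
    (forall i j, analytic_at x (fun z => B z i j)) /\ B x \in unitmx.

Definition regular_at_infty (A : C -> 'M[C]_n) : Prop :=
  regular_at 0 (fun z => A z^-1).

Definition is_ratfun (f : C -> C) : Prop :=
  exists p q : {poly C}, q != 0 /\ forall z : C, q.[z] != 0 -> f z = p.[z] / q.[z].

Definition GL_rat (A : C -> 'M[C]_n) : Prop :=
  (forall i j, is_ratfun (fun z => A z i j)) /\
  exists B : C -> 'M[C]_n, (forall i j, is_ratfun (fun z => B z i j)) /\
    exists s : seq C, forall z, z \notin s -> A z *m B z = 1%:M.

Definition u (z : C) : C := (z - 1) / (z + 1).

Definition Dmx (i : 'I_n) (a : C) : 'M[C]_n :=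
  \matrix_(p, q) (if p == q then (if p == i then a else 1) else 0).

Definition Tmx (i : 'I_n) (l : 'rV[C]_n) : 'M[C]_n :=
  \matrix_(p, q) (if p == i then l 0 q else (p == q)%:R).

(* C(z) = u^{-k} T_{i_1,l_1} D_{i_1,u} ... T_{i_r,l_r} D_{i_r,u},
   with s = [:: (i_1,l_1); ...; (i_r,l_r)] *)
Definition Cmat (k : nat) (s : seq ('I_n * 'rV[C]_n)) (z : C) : 'M[C]_n :=
  (u z) ^- k *: foldr (fun p acc => Tmx p.1 p.2 *m Dmx p.1 (u z) *m acc) 1%:M s.

End Defs.

(* Multiplying M1 by a power u^M of u = (z-1)/(z+1) makes it holomorphic at 1: write
   u^M M1 = F with F(1) = V.  While V is singular, pick l with l V = 0 and a pivot l_i != 0;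
   the i-th row of T_{i,l} F vanishes at 1, so F' = D_{i,1/u} T_{i,l} F is again holomorphic
   at 1, and F = T_{i,l'} D_{i,u} F' where T_{i,l'} is the inverse of T_{i,l}.  Each step
   divides det F by u, whereas det F stays holomorphic at 1 and det M1 has a pole of bounded
   order there, so the process stops with F(1) invertible; then M1 = C F with
   C = u^-M T D ... T D.  C is rational, and holomorphic and invertible at 0 and at infinity
   because u(0) = -1 and u(1/z) = -u(z). *)

From HB Require Import structures.
From mathcomp Require Import all_boot all_order all_algebra.
From mathcomp Require Import complex.
From mathcomp Require Import reals.
From mathcomp Require Import ring lra.
From mathcomp Require boolp.
Set Implicit Arguments. Unset Strict Implicit. Unset Printing Implicit Defensive.
Import Order.TTheory GRing.Theory Num.Theory Normc.
Local Open Scope ring_scope.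
Local Open Scope complex_scope.

Section ComplexNorm.
Variable R : realType.
Local Notation C := R[i].
Implicit Types (x y z : C) (e : R).

Lemma normcE z : `|z| = (normc z)%:C.
Proof. by []. Qed.

Lemma normc_ge0 z : 0 <= normc z.
Proof. by rewrite -ler0c -normcE. Qed.

Lemma normc_gt0 z : (0 < normc z) = (z != 0).
Proof. by rewrite -ltcR -normcE normr_gt0. Qed.

Lemma normcX z k : normc (z ^+ k) = normc z ^+ k.
Proof. by apply: complexI; rewrite rmorphXn -!normcE normrX. Qed.

Lemma normc_real (r : R) : normc r%:C = `|r|.
Proof. by rewrite /normc /= expr0n /= addr0 sqrtr_sqr. Qed.

Lemma normc_nat k : normc (k%:R : C) = k%:R.
Proof. by apply: complexI; rewrite -normcE normr_nat rmorph_nat. Qed.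

Lemma distcC x y : normc (x - y) = normc (y - x).
Proof. by apply: complexI; rewrite -!normcE distrC. Qed.

Lemma normc_sum (I : Type) (s : seq I) (F : I -> C) :
  normc (\sum_(i <- s) F i) <= \sum_(i <- s) normc (F i).
Proof. by rewrite -lecR rmorph_sum -normcE ler_norm_sum. Qed.

Lemma normc_ltE z e : (normc z < e) = (`|z| < e%:C).
Proof. by rewrite normcE ltcR. Qed.

End ComplexNorm.

Section Near.
Variable R : realType.
Local Notation C := R[i].
Implicit Types (x z : C) (P Q : C -> Prop) (f g : C -> C).

Definition near x P : Prop :=
  exists r : R, 0 < r /\ forall z, 0 < normc (z - x) < r -> P z.

Lemma near_mono x P Q : (forall z, P z -> Q z) -> near x P -> near x Q.
Proof. by move=> PQ [r [r0 Pr]]; exists r; split=> // z /Pr/PQ. Qed.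

Lemma near_and x P Q : near x P -> near x Q -> near x (fun z => P z /\ Q z).
Proof.
move=> [r [r0 Pr]] [s [s0 Qs]]; exists (Num.min r s); split; first by rewrite lt_min r0.
move=> z /andP[z0]; rewrite lt_min => /andP[zr zs].
by split; [apply: Pr | apply: Qs]; rewrite z0.
Qed.

Lemma near_lt x (r : R) : 0 < r -> near x (fun z => normc (z - x) < r).
Proof. by move=> r0; exists r; split=> // z /andP[]. Qed.

Lemma near_neq x : near x (fun z => z != x).
Proof.
by exists 1; split=> // z /andP[+ _]; rewrite normc_gt0 subr_eq0.
Qed.

Lemma near_punctured x P : (forall z, z != x -> P z) -> near x P.
Proof. by move=> Px; apply: near_mono (near_neq x). Qed.

Lemma nearE x P : near x P <->
  exists r : R, 0 < r /\ forall z, 0 < `|z - x| < r%:C -> P z.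
Proof.
have E z (r : R) : (0 < normc (z - x) < r) = (0 < `|z - x| < r%:C).
  by rewrite normc_gt0 normr_gt0 normc_ltE.
split=> -[r [r0 Pr]]; exists r; split=> // z.
  by rewrite -E => /Pr.
by rewrite E => /Pr.
Qed.

Lemma germ_eqE n x (A B : C -> 'M[C]_n) :
  germ_eq x A B <-> near x (fun z => A z = B z).
Proof. exact: iff_sym (nearE _ _). Qed.

Definition bounded_near x f : Prop := exists K : R, near x (fun z => normc (f z) <= K).

Lemma bounded_near_ext x f g :
  bounded_near x f -> (forall z, f z = g z) -> bounded_near x g.
Proof. by move=> [K fK] fg; exists K; apply: near_mono fK => z; rewrite fg. Qed.

Lemma bounded_near_const x c : bounded_near x (fun _ => c).
Proof. by exists (normc c); apply: near_punctured. Qed.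

Lemma bounded_nearD x f g :
  bounded_near x f -> bounded_near x g -> bounded_near x (fun z => f z + g z).
Proof.
move=> [K fK] [L gL]; exists (K + L); apply: near_mono (near_and fK gL).
by move=> z [fz gz]; apply: le_trans (le_normcD _ _) _; apply: lerD.
Qed.

Lemma bounded_nearM x f g :
  bounded_near x f -> bounded_near x g -> bounded_near x (fun z => f z * g z).
Proof.
move=> [K fK] [L gL]; exists (K * L); apply: near_mono (near_and fK gL).
by move=> z [fz gz]; rewrite normcM ler_pM ?normc_ge0.
Qed.

Lemma bounded_near_sum x (I : Type) (s : seq I) (F : I -> C -> C) :
  (forall i, bounded_near x (F i)) -> bounded_near x (fun z => \sum_(i <- s) F i z).
Proof.
move=> FB; elim: s => [|i s IHs].
  by apply: (bounded_near_ext (bounded_near_const x 0)) => z; rewrite big_nil.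
by apply: (bounded_near_ext (bounded_nearD (FB i) IHs)) => z; rewrite big_cons.
Qed.

Lemma bounded_near_prod x (I : Type) (s : seq I) (F : I -> C -> C) :
  (forall i, bounded_near x (F i)) -> bounded_near x (fun z => \prod_(i <- s) F i z).
Proof.
move=> FB; elim: s => [|i s IHs].
  by apply: (bounded_near_ext (bounded_near_const x 1)) => z; rewrite big_nil.
by apply: (bounded_near_ext (bounded_nearM (FB i) IHs)) => z; rewrite big_cons.
Qed.

Lemma bounded_near_det n x (F : C -> 'M[C]_n) :
  (forall i j, bounded_near x (fun z => F z i j)) ->
  bounded_near x (fun z => \det (F z)).
Proof.
move=> FB; apply: bounded_near_sum => s.
exact: bounded_nearM (bounded_near_const _ _) (bounded_near_prod _ (fun i => FB _ _)).
Qed.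

Lemma not_near_expr_mul_bounded x g d : (0 < d)%N -> bounded_near x g ->
  ~ near x (fun z => (z - x) ^+ d * g z = 1).
Proof.
move=> d0 [K gK] /(near_and gK) [r [r0 Hr]].
pose e := Num.min (r / 2) (2 * (`|K| + 1))^-1.
have K1 : 0 < 2 * (`|K| + 1) by rewrite mulr_gt0 // ltr_wpDl.
have e0 : 0 < e by rewrite lt_min divr_gt0 //= invr_gt0.
have er : e < r by rewrite gt_min; apply/orP; left; lra.
have eK : e * (2 * (`|K| + 1)) <= 1 by rewrite -ler_pdivlMr // mul1r ge_min lexx orbT.
have eK0 : 0 <= e * `|K| by rewrite mulr_ge0 // ltW.
have := Hr (x + e%:C); rewrite [x + _]addrC addrK normc_real gtr0_norm // e0 er.
move=> /(_ isT) [gK' /(congr1 (@normc R))].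
rewrite normc1 normcM normcX normc_real gtr0_norm //.
have ed : e ^+ d <= e by rewrite ler_iXnr ?ltW //; nra.
have := ler_pM (exprn_ge0 d (ltW e0)) (normc_ge0 _) ed (le_trans gK' (ler_norm K)).
lra.
Qed.

End Near.

Section Geometric.
Variable R : realType.

Lemma bernoulli_le (h : R) m : 0 <= h -> 1 + m%:R * h <= (1 + h) ^+ m.
Proof.
move=> h0; elim: m => [|m IHm]; first by rewrite mul0r addr0 expr0.
have hm : 0 <= (1 + h) ^+ m by rewrite exprn_ge0 // addr_ge0.
have m0 : 0 <= m%:R :> R by [].
rewrite exprS -natr1; nra.
Qed.

Lemma exprn_lt_eventually (q e : R) : 0 <= q < 1 -> 0 < e ->
  exists N, forall m, (N <= m)%N -> q ^+ m < e.
Proof.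
move=> /andP[q0 q1] e0; have [->|qn0] := eqVneq q 0.
  by exists 1%N => -[|m] //; rewrite expr0n.
have qp : 0 < q by rewrite lt_def qn0.
pose h := q^-1 - 1; have h0 : 0 < h by rewrite subr_gt0 invf_gt1.
have eh0 : 0 < e * h by rewrite mulr_gt0.
exists (Num.bound (e * h)^-1) => m mN.
have x0 : 0 <= (e * h)^-1 by rewrite invr_ge0 ltW.
have : (e * h)^-1 < m%:R by apply: lt_le_trans (archi_boundP x0) _; rewrite ler_nat.
rewrite -(ltr_pM2r eh0) mulVf ?gt_eqF // => mh.
have qm : q ^+ m = ((1 + h) ^+ m)^-1 by rewrite /h addrC subrK exprVn invrK.
have hm := bernoulli_le m (ltW h0).
have hm0 : 0 < (1 + h) ^+ m by rewrite exprn_gt0 // addr_gt0.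
rewrite qm -[e]invrK ltf_pV2 ?posrE ?invr_gt0 //.
rewrite -(ltr_pM2l e0) mulfV ?gt_eqF //; nra.
Qed.

Lemma sum_exprn_le (q : R) m : 0 <= q < 1 -> \sum_(k < m) q ^+ k <= (1 - q)^-1.
Proof.
move=> /andP[q0 q1]; have q1' : 0 < 1 - q by rewrite subr_gt0.
have E : (1 - q) * \sum_(k < m) q ^+ k = 1 - q ^+ m.
  by apply: oppr_inj; rewrite -mulNr !opprB subrX1.
rewrite -(ler_pM2l q1') E mulfV ?gt_eqF // gerBl exprn_ge0 //.
Qed.

End Geometric.

Section Convergence.
Variable R : realType.
Local Notation C := R[i].
Implicit Types (S T : nat -> C) (s t c : C).

Definition converges_to S s : Prop :=
  forall e : R, 0 < e -> exists N, forall m, (N <= m)%N -> normc (S m - s) < e.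

Lemma converges_to_const c : converges_to (fun _ => c) c.
Proof. by move=> e e0; exists 0%N => m _; rewrite subrr normc0. Qed.

Lemma converges_to_eventually S T s :
  (exists N, forall m, (N <= m)%N -> S m = T m) ->
  converges_to S s -> converges_to T s.
Proof.
move=> [N0 ST] Ss e e0; have [N HN] := Ss e e0; exists (maxn N0 N) => m.
by rewrite geq_max => /andP[m0 mN]; rewrite -ST ?HN.
Qed.

Lemma converges_toD S T s t : converges_to S s -> converges_to T t ->
  converges_to (fun m => S m + T m) (s + t).
Proof.
move=> Ss Tt e e0.
have [N1 H1] := Ss (e / 2) ltac:(by rewrite divr_gt0).
have [N2 H2] := Tt (e / 2) ltac:(by rewrite divr_gt0).
exists (maxn N1 N2) => m; rewrite geq_max => /andP[m1 m2].
rewrite opprD addrACA; apply: le_lt_trans (le_normcD _ _) _.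
by have := H1 m m1; have := H2 m m2; lra.
Qed.

Lemma converges_toMl c S s : converges_to S s -> converges_to (fun m => c * S m) (c * s).
Proof.
move=> Ss e e0; have c1 : 0 < normc c + 1 by have := normc_ge0 c; lra.
have [N HN] := Ss (e / (normc c + 1)) ltac:(by rewrite divr_gt0).
exists N => m /HN; rewrite -mulrBr normcM ltr_pdivlMr // => lt_e.
by apply: le_lt_trans lt_e; rewrite mulrDr mulr1 mulrC lerDl normc_ge0.
Qed.

Lemma converges_toS S s : converges_to (fun m => S m.+1) s <-> converges_to S s.
Proof.
split=> Ss e /Ss [N HN].
  by exists N.+1 => -[|m] // /HN.
by exists N => m /leqW /HN.
Qed.

Lemma converges_to0_geometric T (B q : R) :
  0 <= q < 1 -> (forall m, normc (T m) <= B * q ^+ m) -> converges_to T 0.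
Proof.
move=> q01 TB e e0.
have B0 : 0 <= B by have := TB 0%N; rewrite expr0 mulr1; apply: le_trans (normc_ge0 _).
have eB : 0 < e / (B + 1) by rewrite divr_gt0 //; lra.
have [N HN] := exprn_lt_eventually q01 eB.
exists N => m /HN; rewrite subr0 ltr_pdivlMr; last lra.
have := TB m; have := exprn_ge0 m (proj1 (andP q01)); nra.
Qed.

End Convergence.

Section PowerSeries.
Variable R : realType.
Local Notation C := R[i].
Implicit Types (x v c w z : C) (f g : C -> C) (a b : nat -> C).

Definition psum a w m : C := \sum_(k < m) a k * w ^+ k.

Lemma ps_convE a w s : ps_conv a w s <-> converges_to (psum a w) s.
Proof. by split=> Ss e /Ss [N HN]; exists N => m /HN; rewrite normc_ltE. Qed.

Lemma psumD a b w m : psum (fun k => a k + b k) w m = psum a w m + psum b w m.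
Proof. by rewrite /psum -big_split; apply: eq_bigr => k _; rewrite mulrDl. Qed.

Lemma psumMl c a w m : psum (fun k => c * a k) w m = c * psum a w m.
Proof. by rewrite /psum mulr_sumr; apply: eq_bigr => k _; rewrite mulrA. Qed.

Lemma psumS a w m : psum a w m.+1 = a 0%N + w * psum (fun k => a k.+1) w m.
Proof.
rewrite /psum big_ord_recl expr0 mulr1 mulr_sumr.
by congr (_ + _); apply: eq_bigr => k _; rewrite exprS mulrCA.
Qed.

Lemma psum_terms_bounded a w s : converges_to (psum a w) s ->
  exists K, 0 <= K /\ forall k, normc (a k) * normc w ^+ k <= K.
Proof.
move=> Ss; have [N HN] := Ss 1 ltr01.
pose t k := normc (a k * w ^+ k).
have t0 k : 0 <= t k by apply: normc_ge0.
have sum0 : 0 <= \sum_(j < N) t j by apply: sumr_ge0.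
exists (\sum_(j < N) t j + 2); split; first by rewrite addr_ge0.
move=> k; have -> : normc (a k) * normc w ^+ k = t k by rewrite /t normcM normcX.
have [kN|Nk] := ltnP k N.
  rewrite (bigD1 (Ordinal kN)) //=.
  have : 0 <= \sum_(j < N | j != Ordinal kN) t j by apply: sumr_ge0.
  lra.
have -> : t k = normc ((psum a w k.+1 - s) - (psum a w k - s)).
  by rewrite /t /psum big_ord_recr /=; congr normc; ring.
apply: le_trans (le_normcD _ _) _; rewrite normcN.
by have := HN _ (leqW Nk); have := HN _ Nk; lra.
Qed.

Lemma psum_coef_bounded a x f (r rho : R) :
  (forall z, 0 < normc (z - x) < r -> converges_to (psum a (z - x)) (f z)) ->
  0 < rho -> rho < r -> exists K, 0 <= K /\ forall k, normc (a k) * rho ^+ k <= K.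
Proof.
move=> Hr rho0 rho_r.
have := Hr (x + rho%:C); rewrite [x + _]addrC addrK normc_real gtr0_norm // rho0 rho_r.
move=> /(_ isT) /psum_terms_bounded [K [K0 HK]]; exists K; split=> // k.
by have := HK k; rewrite normc_real gtr0_norm.
Qed.

Definition expands_at x f v : Prop :=
  exists a, a 0%N = v /\ near x (fun z => converges_to (psum a (z - x)) (f z)).

Lemma expands_at_ext x f g v :
  expands_at x f v -> (forall z, z != x -> f z = g z) -> expands_at x g v.
Proof.
move=> [a [a0 Ha]] fg; exists a; split=> //.
by apply: near_mono (near_and (near_neq x) Ha) => z [/fg <-].
Qed.

Lemma expands_at_const x c : expands_at x (fun _ => c) c.
Proof.
exists (fun k => if k is 0%N then c else 0); split=> //; apply: near_punctured => z _.
apply/converges_toS; apply: converges_to_eventually (converges_to_const c).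
by exists 0%N => m _; rewrite psumS /psum big1 ?mulr0 ?addr0 // => k _; rewrite mul0r.
Qed.

Lemma expands_atD x f g v w :
  expands_at x f v -> expands_at x g w -> expands_at x (fun z => f z + g z) (v + w).
Proof.
move=> [a [a0 Ha]] [b [b0 Hb]]; exists (fun k => a k + b k); split; first by rewrite a0 b0.
apply: near_mono (near_and Ha Hb) => z [fz gz].
by apply: converges_to_eventually (converges_toD fz gz); exists 0%N => m _; rewrite psumD.
Qed.

Lemma expands_atMl x c f v : expands_at x f v -> expands_at x (fun z => c * f z) (c * v).
Proof.
move=> [a [a0 Ha]]; exists (fun k => c * a k); split; first by rewrite a0.
apply: near_mono Ha => z fz.
by apply: converges_to_eventually (converges_toMl c fz); exists 0%N => m _; rewrite psumMl.
Qed.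

Lemma expands_at_sum x (I : Type) (s : seq I) (F : I -> C -> C) (V : I -> C) :
  (forall i, expands_at x (F i) (V i)) ->
  expands_at x (fun z => \sum_(i <- s) F i z) (\sum_(i <- s) V i).
Proof.
move=> FV; elim: s => [|i s IHs].
  by rewrite big_nil; apply: (expands_at_ext (expands_at_const x 0)) => z _; rewrite big_nil.
rewrite big_cons; apply: (expands_at_ext (expands_atD (FV i) IHs)) => z _.
by rewrite big_cons.
Qed.

Lemma expands_at_mulB x f v : expands_at x f v -> expands_at x (fun z => (z - x) * f z) 0.
Proof.
move=> [a [_ Ha]]; exists (fun k => if k is k'.+1 then a k' else 0); split=> //.
apply: near_mono Ha => z fz; apply/converges_toS.
by apply: converges_to_eventually (converges_toMl (z - x) fz); exists 0%N => m _; rewrite psumS add0r.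
Qed.

Lemma expands_at_mulBX x f v p :
  expands_at x f v -> exists w, expands_at x (fun z => (z - x) ^+ p * f z) w.
Proof.
move=> fv; elim: p => [|p [w IHp]].
  by exists v; apply: (expands_at_ext fv) => z _; rewrite expr0 mul1r.
by exists 0; apply: (expands_at_ext (expands_at_mulB IHp)) => z _; rewrite exprS mulrA.
Qed.

Lemma expands_at_divB x f :
  expands_at x f 0 -> exists w, expands_at x (fun z => (z - x)^-1 * f z) w.
Proof.
move=> [a [a0 Ha]]; exists (a 1%N), (fun k => a k.+1); split=> //.
apply: near_mono (near_and (near_neq x) Ha) => z [zx fz].
have zx0 : z - x != 0 by rewrite subr_eq0.
apply: converges_to_eventually (converges_toMl (z - x)^-1 (proj2 (converges_toS _ _) fz)).
by exists 0%N => m _; rewrite psumS a0 add0r mulKf.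
Qed.

Lemma expands_at_bounded x f v : expands_at x f v -> bounded_near x f.
Proof.
move=> [a [_ [r [r0 Hr]]]]; have r2 : 0 < r / 2 by rewrite divr_gt0.
have r2r : r / 2 < r by lra.
have [K [K0 HK]] := psum_coef_bounded Hr r2 r2r.
exists (2 * K + 1), (r / 4); split; first by rewrite divr_gt0.
move=> z /andP[z0 zr]; set w := z - x in z0 zr *.
have [N HN] := Hr z ltac:(rewrite z0 /=; lra) 1 ltr01.
set q := normc w / (r / 2).
have q01 : 0 <= q < 1 by rewrite divr_ge0 ?normc_ge0 ?ltW //= ltr_pdivrMr //; lra.
have q2 : q <= 1 / 2 by rewrite ler_pdivrMr //; lra.
have psumN : normc (psum a w N) <= 2 * K.
  apply: le_trans (normc_sum _ _) _.
  apply: (@le_trans _ _ (\sum_(k < N) K * q ^+ k)).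
    apply: ler_sum => k _; rewrite normcM normcX.
    have -> : normc w ^+ k = (r / 2) ^+ k * q ^+ k.
      by rewrite -exprMn /q mulrCA mulfV ?gt_eqF // mulr1.
    by rewrite mulrA; apply: ler_wpM2r => //; rewrite exprn_ge0 //; case/andP: q01.
  rewrite -mulr_sumr [2 * K]mulrC; apply: ler_wpM2l => //.
  by apply: le_trans (sum_exprn_le N q01) _; rewrite invf_ple ?posrE; lra.
have := HN N (leqnn N); rewrite distcC.
have := le_normcD (psum a w N) (f z - psum a w N); rewrite addrC subrK; lra.
Qed.

Lemma expands_at_analytic x f v :
  expands_at x f v -> analytic_at x (fun z => if z == x then v else f z).
Proof.
move=> [a [a0 [r [r0 Hr]]]]; exists r, a; split=> // z zr; apply/ps_convE.
have [->|zx] := eqP.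
  rewrite subrr; apply/converges_toS; apply: converges_to_eventually (converges_to_const v).
  by exists 0%N => m _; rewrite psumS mul0r addr0.
by apply: Hr; rewrite normc_ltE zr andbT normc_gt0 subr_eq0; apply/eqP.
Qed.

Lemma laurent_atE x f :
  laurent_at x f <-> exists m v, expands_at x (fun z => (z - x) ^+ m * f z) v.
Proof.
split=> [[m [r [a [r0 Ha]]]] | [m [v [a [a0 Ha]]]]].
  exists m, (a 0%N), a; split=> //; apply/nearE; exists r; split=> // z /Ha.
  by move/ps_convE.
exists m; have [r [r0 Hr]] := proj1 (nearE _ _) Ha; exists r, a; split=> // z /Hr.
by move/ps_convE.
Qed.

End PowerSeries.

Section Division.
Variable R : realType.
Local Notation C := R[i].
Implicit Types (x al w z : C) (f : C -> C) (a : nat -> C).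

Fixpoint div_coef a al k : C :=
  if k is k'.+1 then (a k - div_coef a al k') / al else a 0%N / al.

Definition div_rem a al m : C := if m is m'.+1 then div_coef a al m' else 0.

Lemma psum_div_coef a al w m : al != 0 ->
  (al + w) * psum (div_coef a al) w m = psum a w m + div_rem a al m * w ^+ m.
Proof.
move=> al0; elim: m => [|m IHm]; first by rewrite /psum !big_ord0 mulr0 mul0r addr0.
have am : a m = al * div_coef a al m + div_rem a al m.
  by case: m {IHm} => [|m] /=; rewrite mulrC divfK // ?addr0 // subrK.
rewrite /psum !big_ord_recr /= -/(psum _ w m) -/(psum _ w m) mulrDr IHm am exprS.
ring.
Qed.

Lemma div_coef_bounded a al (K rho : R) : al != 0 -> 0 < rho ->
  rho <= normc al / 2 -> (forall k, normc (a k) * rho ^+ k <= K) ->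
  forall k, normc (div_coef a al k) * rho ^+ k <= 2 * K / normc al.
Proof.
move=> al0 rho0 rho_al aK; have al_gt0 : 0 < normc al by rewrite normc_gt0.
have K0 : 0 <= K by apply: le_trans (aK 0%N); rewrite mulr_ge0 ?normc_ge0 ?exprn_ge0 ?ltW.
set L := 2 * K / normc al.
have LK : L * rho <= K.
  by rewrite /L mulrAC ler_pdivrMr //; have := ler_wpM2l K0 rho_al; lra.
elim=> [|k IHk] /=; rewrite normcM normcV mulrAC ler_pdivrMr // [L * _]divfK ?gt_eqF //.
  by have := aK 0%N; rewrite !expr0 !mulr1; lra.
have := aK k.+1; rewrite exprS.
have rk0 : 0 <= rho * rho ^+ k by rewrite mulr_ge0 ?exprn_ge0 ?ltW.
have h1 : normc (a k.+1 - div_coef a al k) * (rho * rho ^+ k) <=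
    (normc (a k.+1) + normc (div_coef a al k)) * (rho * rho ^+ k).
  rewrite ler_pM2r ?mulr_gt0 ?exprn_gt0 //.
  by apply: le_trans (le_normcD _ _) _; rewrite normcN.
have h2 := ler_wpM2r (ltW rho0) IHk; lra.
Qed.

Lemma expands_at_div x al f v : al != 0 -> expands_at x f v ->
  expands_at x (fun z => f z / (al + (z - x))) (v / al).
Proof.
move=> al0 [a [a0 [r [r0 Hr]]]]; have al_gt0 : 0 < normc al by rewrite normc_gt0.
set rho := Num.min (r / 2) (normc al / 2).
have rho0 : 0 < rho by rewrite lt_min !divr_gt0.
have rho_r : rho < r by rewrite gt_min; apply/orP; left; lra.
have rho_al : rho <= normc al / 2 by rewrite ge_min lexx orbT.
have [K [K0 aK]] := psum_coef_bounded Hr rho0 rho_r.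
have bK := div_coef_bounded al0 rho0 rho_al aK.
exists (div_coef a al); split; first by rewrite /= a0.
exists rho; split=> // z /andP[z0 z_rho]; set w := z - x in z0 z_rho *.
have alw0 : al + w != 0.
  apply: contraTneq z_rho => /(canRL (addKr al)); rewrite addr0 => ->.
  by rewrite normcN -leNgt; lra.
set q := normc w / rho.
have q01 : 0 <= q < 1 by rewrite divr_ge0 ?normc_ge0 ?ltW //= ltr_pdivrMr // mul1r.
have rem0 : converges_to (fun m => div_rem a al m * w ^+ m) 0.
  apply: (@converges_to0_geometric _ _ (2 * K / normc al * rho) q q01) => -[|k]; rewrite /div_rem.
    rewrite mul0r normc0 expr0 mulr1; apply: mulr_ge0 (ltW rho0).
    by rewrite divr_ge0 ?mulr_ge0 ?normc_ge0.
  rewrite normcM normcX.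
  have -> : normc w ^+ k.+1 = rho ^+ k * (rho * q ^+ k.+1).
    by rewrite mulrA -exprSr -exprMn /q mulrCA mulfV ?gt_eqF // mulr1.
  have hq : 0 <= rho * q ^+ k.+1.
    by apply: mulr_ge0; [exact: ltW | apply: exprn_ge0; case/andP: q01].
  by have := ler_wpM2r hq (bK k); rewrite !mulrA.
have := converges_toMl (al + w)^-1 (converges_toD (Hr z _) rem0).
rewrite z0 (lt_trans z_rho rho_r) addr0 mulrC => /(_ isT).
apply: converges_to_eventually; exists 0%N => m _.
by rewrite -psum_div_coef // mulKf.
Qed.

End Division.

Section Multipliers.
Variable R : realType.
Local Notation C := R[i].
Local Notation u := (@u R).
Implicit Types (x c al : C) (f phi psi : C -> C).

Definition expansion_multiplier x phi : Prop :=
  forall f v, expands_at x f v -> expands_at x (fun z => phi z * f z) (phi x * v).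

Lemma multiplier_ext x phi psi :
  expansion_multiplier x phi -> (forall z, phi z = psi z) -> expansion_multiplier x psi.
Proof.
by move=> phiM E f v /phiM fv; rewrite -E; apply: (expands_at_ext fv) => z _; rewrite E.
Qed.

Lemma multiplier_const x c : expansion_multiplier x (fun _ => c).
Proof. by move=> f v; apply: expands_atMl. Qed.

Lemma multiplier_affine x c : expansion_multiplier x (fun z => c + (z - x)).
Proof.
move=> f v fv; rewrite subrr addr0 -[c * v]addr0.
by apply: (expands_at_ext (expands_atD (expands_atMl c fv) (expands_at_mulB fv))) => z _; ring.
Qed.

Lemma multiplier_inv_affine x al : al != 0 ->
  expansion_multiplier x (fun z => (al + (z - x))^-1).
Proof.
move=> al0 f v /(expands_at_div al0) fv; rewrite subrr addr0 mulrC.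
by apply: (expands_at_ext fv) => z _; rewrite mulrC.
Qed.

Lemma multiplierM x phi psi : expansion_multiplier x phi -> expansion_multiplier x psi ->
  expansion_multiplier x (fun z => phi z * psi z).
Proof.
move=> phiM psiM f v /psiM /phiM fv; rewrite -mulrA.
by apply: (expands_at_ext fv) => z _; rewrite mulrA.
Qed.

Lemma multiplierX x phi k : expansion_multiplier x phi ->
  expansion_multiplier x (fun z => phi z ^+ k).
Proof.
move=> phiM; elim: k => [|k IHk].
  by apply: (multiplier_ext (@multiplier_const x 1)) => z; rewrite expr0.
by apply: (multiplier_ext (multiplierM phiM IHk)) => z; rewrite exprS.
Qed.

Lemma multiplier_u0 : expansion_multiplier 0 u.
Proof.
apply: (multiplier_ext (multiplierM (@multiplier_affine 0 (-1))
  (@multiplier_inv_affine 0 1 (oner_neq0 C)))) => z.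
by rewrite /u subr0 addrC [1 + z]addrC.
Qed.

Lemma multiplier_uV0 : expansion_multiplier 0 (fun z => (u z)^-1).
Proof.
have N1 : (-1 : C) != 0 by rewrite oppr_eq0 oner_eq0.
apply: (multiplier_ext (multiplierM (@multiplier_affine 0 1)
  (@multiplier_inv_affine 0 (-1) N1))) => z.
by rewrite /u invf_div subr0 addrC [-1 + z]addrC.
Qed.

Lemma multiplier_addr1V1 : expansion_multiplier 1 (fun z => (z + 1)^-1).
Proof.
have two0 : (2 : C) != 0 by rewrite pnatr_eq0.
by apply: (multiplier_ext (@multiplier_inv_affine 1 2 two0)) => z; congr (_^-1); ring.
Qed.

Lemma multiplier_u1 : expansion_multiplier 1 u.
Proof.
apply: (multiplier_ext (multiplierM (@multiplier_affine 1 0) multiplier_addr1V1)) => z.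
by rewrite /u add0r.
Qed.

Lemma expands_at_mulVu g : expands_at 1 g 0 ->
  exists v, expands_at 1 (fun z => (u z)^-1 * g z) v.
Proof.
move=> /expands_at_divB [v /(@multiplier_affine 1 2)] gv; eexists.
by apply: (expands_at_ext gv) => z _; rewrite /u invf_div mulrA; congr (_ / _ * _); ring.
Qed.

End Multipliers.

Section Laurent.
Variable R : realType.
Local Notation C := R[i].
Local Notation u := (@u R).
Implicit Types (x : C) (f g phi : C -> C).

Lemma laurent_at_ext x f g :
  laurent_at x f -> (forall z, z != x -> f z = g z) -> laurent_at x g.
Proof.
move=> /laurent_atE [m [v fv]] fg; apply/laurent_atE; exists m, v.
by apply: (expands_at_ext fv) => z zx; rewrite fg.
Qed.

Lemma expands_at_laurent x f v : expands_at x f v -> laurent_at x f.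
Proof.
move=> fv; apply/laurent_atE; exists 0%N, v.
by apply: (expands_at_ext fv) => z _; rewrite expr0 mul1r.
Qed.

Lemma expands_at_mulBX_le x f m M v : (m <= M)%N ->
  expands_at x (fun z => (z - x) ^+ m * f z) v ->
  exists w, expands_at x (fun z => (z - x) ^+ M * f z) w.
Proof.
move=> mM /(expands_at_mulBX (M - m)) [w fw]; exists w.
by apply: (expands_at_ext fw) => z _; rewrite mulrA -exprD subnK.
Qed.

Lemma laurent_atD x f g :
  laurent_at x f -> laurent_at x g -> laurent_at x (fun z => f z + g z).
Proof.
move=> /laurent_atE [m [v fv]] /laurent_atE [p [w gw]]; apply/laurent_atE.
have [v' fv'] := expands_at_mulBX_le (leq_addr p m) fv.
have [w' gw'] := expands_at_mulBX_le (leq_addl m p) gw.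
by exists (m + p)%N, (v' + w'); apply: (expands_at_ext (expands_atD fv' gw')) => z _; ring.
Qed.

Lemma laurent_at_multiplier x phi f : expansion_multiplier x phi ->
  laurent_at x f -> laurent_at x (fun z => phi z * f z).
Proof.
move=> phiM /laurent_atE [m [v /phiM fv]]; apply/laurent_atE; exists m, (phi x * v).
by apply: (expands_at_ext fv) => z _; rewrite mulrCA.
Qed.

Lemma laurent_at_sum x (I : Type) (s : seq I) (F : I -> C -> C) :
  (forall i, laurent_at x (F i)) -> laurent_at x (fun z => \sum_(i <- s) F i z).
Proof.
move=> FL; elim: s => [|i s IHs].
  by apply: (laurent_at_ext (expands_at_laurent (expands_at_const x 0))) => z _; rewrite big_nil.
by apply: (laurent_at_ext (laurent_atD (FL i) IHs)) => z _; rewrite big_cons.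
Qed.

Lemma laurent_at_mulVu f : laurent_at 1 f -> laurent_at 1 (fun z => (u z)^-1 * f z).
Proof.
move=> /laurent_atE [m [v /(@multiplier_affine _ 1 2) fv]]; apply/laurent_atE.
exists m.+1, ((2 + (1 - 1)) * v); apply: (expands_at_ext fv) => z z1.
by rewrite /u invf_div exprSr; field; rewrite subr_eq0.
Qed.

Lemma laurent_at_mulVuX k f : laurent_at 1 f -> laurent_at 1 (fun z => (u z) ^- k * f z).
Proof.
move=> fL; elim: k => [|k IHk].
  by apply: (laurent_at_ext fL) => z _; rewrite expr0 invr1 mul1r.
by apply: (laurent_at_ext (laurent_at_mulVu IHk)) => z _; rewrite mulrA -invfM -exprS.
Qed.

End Laurent.

Section Elementary.
Variable R : realType.
Local Notation C := R[i].
Variable n : nat.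
Local Notation Dmx := (@Dmx R n).
Local Notation Tmx := (@Tmx R n).
Implicit Types (A V : 'M[C]_n) (l : 'rV[C]_n) (a : C) (i : 'I_n).

Lemma Dmx_mulmx i a A :
  Dmx i a *m A = \matrix_(p, q) (if p == i then a * A p q else A p q).
Proof.
apply/matrixP => p q; rewrite !mxE (bigD1 p) //= big1 ?addr0.
  by rewrite !mxE eqxx; case: (p == i); rewrite ?mul1r.
by move=> k /negbTE kp; rewrite !mxE eq_sym kp mul0r.
Qed.

Lemma mulmx_Dmx i a A :
  A *m Dmx i a = \matrix_(p, q) (if q == i then A p q * a else A p q).
Proof.
apply/matrixP => p q; rewrite !mxE (bigD1 q) //= big1 ?addr0.
  by rewrite !mxE eqxx; case: (q == i); rewrite ?mulr1.
by move=> k /negbTE kq; rewrite !mxE kq mulr0.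
Qed.

Lemma Dmx_mulV i a : a != 0 -> Dmx i a *m Dmx i a^-1 = 1%:M.
Proof.
move=> a0; rewrite Dmx_mulmx; apply/matrixP => p q; rewrite !mxE.
have [->|pi] := eqVneq p i; last by case: eqP.
by case: eqP; rewrite ?mulfV ?mulr0.
Qed.

Lemma Tmx_mulmx_row i l A q : (Tmx i l *m A) i q = (l *m A) 0 q.
Proof. by rewrite !mxE; apply: eq_bigr => p _; rewrite !mxE eqxx. Qed.

Lemma Tmx_mulmx_rowN i l A p q : p != i -> (Tmx i l *m A) p q = A p q.
Proof.
move=> /negbTE pi; rewrite !mxE (bigD1 p) //= big1 ?addr0.
  by rewrite !mxE pi eqxx mul1r.
by move=> k /negbTE kp; rewrite !mxE pi eq_sym kp mul0r.
Qed.

Definition Tinv_row i l : 'rV[C]_n :=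
  \row_q (if q == i then (l 0 i)^-1 else - l 0 q / l 0 i).

Lemma Tmx_inv_rowK i l : l 0 i != 0 -> Tmx i (Tinv_row i l) *m Tmx i l = 1%:M.
Proof.
move=> li0; apply/matrixP => p q.
have [->|pi] := eqVneq p i; last by rewrite Tmx_mulmx_rowN // !mxE (negbTE pi).
rewrite Tmx_mulmx_row !mxE (bigD1 i) //= !mxE !eqxx /=.
rewrite (eq_bigr (fun k => - l 0 k / l 0 i * (k == q)%:R)); last first.
  by move=> k /negbTE ki; rewrite !mxE ki.
have [<-|iq] := eqVneq i q.
  by rewrite big1 ?addr0 ?mulVf // => k /negbTE ki; rewrite ki mulr0.
rewrite (bigD1 q) 1?eq_sym //= big1 ?addr0 ?eqxx ?mulr1.
  by rewrite mulrC; field.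
by move=> k /andP[_ /negbTE ->]; rewrite mulr0.
Qed.

Lemma Tinv_row_pivot i l : l 0 i != 0 -> Tinv_row i l 0 i != 0.
Proof. by move=> li0; rewrite mxE eqxx invr_eq0. Qed.

Lemma Tmx_unit i l : l 0 i != 0 -> Tmx i l \in unitmx.
Proof.
by move=> li0; case: (mulmx1_unit (Tmx_inv_rowK li0)).
Qed.

Lemma det_Dmx i a : \det (Dmx i a) = a.
Proof.
have -> : Dmx i a = diag_mx (\row_p (if p == i then a else 1)).
  by apply/matrixP => p q; rewrite !mxE; case: eqVneq => [->|]; rewrite ?mxE ?mulr1n ?mulr0n.
rewrite det_diag (bigD1 i) //= big1 ?mulr1 ?mxE ?eqxx // => p /negbTE pi.
by rewrite mxE pi.
Qed.

Lemma singular_row_kernel V : V \notin unitmx ->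
  exists (l : 'rV[C]_n) (i : 'I_n), l 0 i != 0 /\ l *m V = 0.
Proof.
rewrite unitmxE unitfE negbK => /det0P [l l0 lV]; exists l.
have [i li0|l_eq0] := pickP (fun i => l 0 i != 0); first by exists i.
by case/eqP: l0; apply/matrixP => p q; rewrite ord1 mxE; apply/eqP/negbFE/l_eq0.
Qed.

Definition pivot_nz (p : 'I_n * 'rV[C]_n) : bool := p.2 0 p.1 != 0.

Definition TDprod (s : seq ('I_n * 'rV[C]_n)) a : 'M[C]_n :=
  foldr (fun p acc => Tmx p.1 p.2 *m Dmx p.1 a *m acc) 1%:M s.

Definition TDprod_inv (s : seq ('I_n * 'rV[C]_n)) a : 'M[C]_n :=
  foldr (fun p acc => acc *m (Dmx p.1 a^-1 *m invmx (Tmx p.1 p.2))) 1%:M s.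

Lemma Cmat_TDprod k s z : Cmat k s z = u z ^- k *: TDprod s (u z).
Proof. by []. Qed.

Lemma TDprod_mulV s a : a != 0 -> all pivot_nz s -> TDprod s a *m TDprod_inv s a = 1%:M.
Proof.
move=> a0; elim: s => [|p s IHs] /=; first by rewrite mulmx1.
move=> /andP[p0 s0]; rewrite -!mulmxA (mulmxA (TDprod s a)) IHs // mul1mx.
by rewrite (mulmxA (Dmx _ _)) Dmx_mulV // mul1mx mulmxV // Tmx_unit.
Qed.

Lemma TDprod_invK s a : a != 0 -> all pivot_nz s -> TDprod_inv s a *m TDprod s a = 1%:M.
Proof. by move=> a0 s0; apply/mulmx1C/TDprod_mulV. Qed.

Lemma scale_TDprod_mulV k s a : a != 0 -> all pivot_nz s ->
  (a ^- k *: TDprod s a) *m (a ^+ k *: TDprod_inv s a) = 1%:M.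
Proof.
move=> a0 s0; rewrite -scalemxAl -scalemxAr scalerA TDprod_mulV //.
by rewrite mulVf ?scale1r // expf_neq0.
Qed.

Lemma TDprod_rcons s p a : TDprod (rcons s p) a = TDprod s a *m (Tmx p.1 p.2 *m Dmx p.1 a).
Proof.
elim: s => [|q s IHs] /=; first by rewrite mul1mx mulmx1.
by rewrite IHs !mulmxA.
Qed.

Lemma det_TDprod s a :
  \det (TDprod s a) = \prod_(p <- s) \det (Tmx p.1 p.2) * a ^+ size s.
Proof.
elim: s => [|p s IHs] /=; first by rewrite det1 big_nil mul1r.
by rewrite !det_mulmx IHs det_Dmx big_cons exprS; ring.
Qed.

End Elementary.

Arguments pivot_nz {R n} p.

Section MatrixExpansions.
Variable R : realType.
Local Notation C := R[i].
Local Notation u := (@u R).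
Variable n : nat.
Local Notation Dmx := (@Dmx R n).
Local Notation Tmx := (@Tmx R n).
Local Notation TDprod := (@TDprod R n).
Implicit Types (F G : C -> 'M[C]_n) (A V : 'M[C]_n) (x : C) (phi : C -> C).

Definition expands_mx x F V : Prop :=
  forall i j, expands_at x (fun z => F z i j) (V i j).

Lemma expands_mx_ext x F G V :
  expands_mx x F V -> (forall z, z != x -> F z = G z) -> expands_mx x G V.
Proof. by move=> FV FG i j; apply: (expands_at_ext (FV i j)) => z zx; rewrite FG. Qed.

Lemma expands_mx_mull x A F V :
  expands_mx x F V -> expands_mx x (fun z => A *m F z) (A *m V).
Proof.
move=> FV i j; rewrite mxE.
have := expands_at_sum (index_enum 'I_n) (fun k => expands_atMl (A i k) (FV k j)).
by move=> AFV; apply: (expands_at_ext AFV) => z _; rewrite mxE.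
Qed.

Lemma expands_mx_scale x phi F V : expansion_multiplier x phi ->
  expands_mx x F V -> expands_mx x (fun z => phi z *: F z) (phi x *: V).
Proof.
move=> phiM FV i j; rewrite mxE.
by apply: (expands_at_ext (phiM _ _ (FV i j))) => z _; rewrite mxE.
Qed.

Lemma expands_mx_Dmx x phi i F V : expansion_multiplier x phi ->
  expands_mx x F V -> expands_mx x (fun z => Dmx i (phi z) *m F z) (Dmx i (phi x) *m V).
Proof.
move=> phiM FV p q; rewrite Dmx_mulmx mxE.
have [->|pi] := eqVneq p i.
  by apply: (expands_at_ext (phiM _ _ (FV i q))) => z _; rewrite Dmx_mulmx mxE eqxx.
by apply: (expands_at_ext (FV p q)) => z _; rewrite Dmx_mulmx mxE (negbTE pi).
Qed.

Lemma expands_mx_TDprod x phi s : expansion_multiplier x phi ->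
  expands_mx x (fun z => TDprod s (phi z)) (TDprod s (phi x)).
Proof.
move=> phiM; elim: s => [|p s IHs] /=; first by move=> i j; apply: expands_at_const.
have := expands_mx_mull (Tmx p.1 p.2) (expands_mx_Dmx p.1 phiM IHs); rewrite mulmxA.
by move=> TDV; apply: (expands_mx_ext TDV) => z _; rewrite mulmxA.
Qed.

Lemma expands_mx_bounded x F V :
  expands_mx x F V -> forall i j, bounded_near x (fun z => F z i j).
Proof. by move=> FV i j; apply: expands_at_bounded (FV i j). Qed.

Lemma expands_mx_laurent x F V :
  expands_mx x F V -> forall i j, laurent_at x (fun z => F z i j).
Proof. by move=> FV i j; apply: expands_at_laurent (FV i j). Qed.

Lemma regular_at_ext x F G :
  regular_at x F -> (forall z, z != x -> F z = G z) -> regular_at x G.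
Proof.
move=> [B [/germ_eqE FB BV]] FG; exists B; split=> //; apply/germ_eqE.
by apply: near_mono (near_and FB (near_neq x)) => z [<- zx]; rewrite FG.
Qed.

Lemma regular_at_expands_mx x F V : expands_mx x F V -> V \in unitmx -> regular_at x F.
Proof.
move=> FV V_unit; exists (fun z => if z == x then V else F z); split.
  by apply/germ_eqE; apply: near_mono (near_neq x) => z /negbTE ->.
split; last by rewrite eqxx.
move=> i j; have [r [a [r0 Ha]]] := expands_at_analytic (FV i j).
by exists r, a; split=> // z /Ha; case: (z == x).
Qed.

Lemma regular_at_scale_TDprod x phi k s :
  expansion_multiplier x phi -> expansion_multiplier x (fun z => (phi z)^-1) ->
  phi x != 0 -> all pivot_nz s ->
  regular_at x (fun z => phi z ^- k *: TDprod s (phi z)).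
Proof.
move=> phiM phiVM phix0 s0.
have phiVkM : expansion_multiplier x (fun z => phi z ^- k).
  by apply: (multiplier_ext (multiplierX k phiVM)) => z; rewrite exprVn.
apply: regular_at_expands_mx (expands_mx_scale phiVkM (expands_mx_TDprod s phiM)) _.
by case: (mulmx1_unit (scale_TDprod_mulV k phix0 s0)).
Qed.

Definition laurent_mx x F : Prop := forall i j, laurent_at x (fun z => F z i j).

Lemma laurent_mx_ext x F G :
  laurent_mx x F -> (forall z, z != x -> F z = G z) -> laurent_mx x G.
Proof. by move=> FL FG i j; apply: (laurent_at_ext (FL i j)) => z zx; rewrite FG. Qed.

Lemma laurent_mx_mulmxr x F A : laurent_mx x F -> laurent_mx x (fun z => F z *m A).
Proof.
move=> FL i j.
have := laurent_at_sum (index_enum 'I_n)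
  (fun k => laurent_at_multiplier (@multiplier_const _ x (A k j)) (FL i k)).
by move=> FAL; apply: (laurent_at_ext FAL) => z _; rewrite mxE; apply: eq_bigr => k _; rewrite mulrC.
Qed.

Lemma laurent_mx_mulmx_Dmx x phi i F : expansion_multiplier x phi ->
  laurent_mx x F -> laurent_mx x (fun z => F z *m Dmx i (phi z)).
Proof.
move=> phiM FL p q; have [qi|qi] := eqVneq q i.
  apply: (laurent_at_ext (laurent_at_multiplier phiM (FL p q))) => z _.
  by rewrite mulmx_Dmx mxE qi eqxx mulrC.
by apply: (laurent_at_ext (FL p q)) => z _; rewrite mulmx_Dmx mxE (negbTE qi).
Qed.

Lemma laurent_mx_mulmx_TDprod x phi s F : expansion_multiplier x phi ->
  laurent_mx x F -> laurent_mx x (fun z => F z *m TDprod s (phi z)).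
Proof.
move=> phiM; elim: s F => [|p s IHs] F FL /=.
  by apply: (laurent_mx_ext FL) => z _; rewrite mulmx1.
have := IHs _ (laurent_mx_mulmx_Dmx p.1 phiM (laurent_mx_mulmxr (Tmx p.1 p.2) FL)).
by move=> FTL; apply: (laurent_mx_ext FTL) => z _; rewrite !mulmxA.
Qed.

Lemma laurent_mx_scale_uVX k F : laurent_mx 1 F -> laurent_mx 1 (fun z => u z ^- k *: F z).
Proof.
move=> FL i j; apply: (laurent_at_ext (laurent_at_mulVuX k (FL i j))) => z _.
by rewrite mxE.
Qed.

Lemma laurent_mx_expands x F : laurent_mx x F ->
  exists M V, expands_mx x (fun z => (z - x) ^+ M *: F z) V.
Proof.
move=> FL; have [m Hm] := boolp.choice (fun ij : 'I_n * 'I_n => proj1 (laurent_atE _ _) (FL ij.1 ij.2)).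
pose M := \max_ij m ij.
have /boolp.choice [V HV] : forall ij : 'I_n * 'I_n,
    exists v, expands_at x (fun z => (z - x) ^+ M * F z ij.1 ij.2) v.
  by move=> ij; have [v fv] := Hm ij; apply: expands_at_mulBX_le (leq_bigmax ij) fv.
exists M, (\matrix_(i, j) V (i, j)) => i j; rewrite mxE.
by apply: (expands_at_ext (HV (i, j))) => z _; rewrite mxE.
Qed.

End MatrixExpansions.

Section RationalFunctions.
Variable R : realType.
Local Notation C := R[i].
Local Notation u := (@u R).
Implicit Types (f g : C -> C) (c : C).

Lemma ratfun_ext f g : is_ratfun f -> (forall z, f z = g z) -> is_ratfun g.
Proof. by move=> [p [q [q0 fpq]]] fg; exists p, q; split=> // z /fpq; rewrite fg. Qed.

Lemma ratfun_const c : is_ratfun (fun _ => c).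
Proof.
by exists c%:P, 1; split=> [|z _]; rewrite ?oner_neq0 // !hornerE divr1.
Qed.

Lemma ratfunD f g : is_ratfun f -> is_ratfun g -> is_ratfun (fun z => f z + g z).
Proof.
move=> [p1 [q1 [q10 f1]]] [p2 [q2 [q20 f2]]].
exists (p1 * q2 + p2 * q1), (q1 * q2); split; first by rewrite mulf_neq0.
move=> z; rewrite hornerM mulf_eq0 negb_or => /andP[z1 z2].
by rewrite f1 // f2 // !(hornerM, hornerD); field; rewrite z1 z2.
Qed.

Lemma ratfunM f g : is_ratfun f -> is_ratfun g -> is_ratfun (fun z => f z * g z).
Proof.
move=> [p1 [q1 [q10 f1]]] [p2 [q2 [q20 f2]]].
exists (p1 * p2), (q1 * q2); split; first by rewrite mulf_neq0.
move=> z; rewrite hornerM mulf_eq0 negb_or => /andP[z1 z2].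
by rewrite f1 // f2 // !hornerM; field; rewrite z1 z2.
Qed.

Lemma ratfun_sum (I : Type) (s : seq I) (F : I -> C -> C) :
  (forall i, is_ratfun (F i)) -> is_ratfun (fun z => \sum_(i <- s) F i z).
Proof.
move=> FR; elim: s => [|i s IHs].
  by apply: (ratfun_ext (ratfun_const 0)) => z; rewrite big_nil.
by apply: (ratfun_ext (ratfunD (FR i) IHs)) => z; rewrite big_cons.
Qed.

Lemma ratfunX f k : is_ratfun f -> is_ratfun (fun z => f z ^+ k).
Proof.
move=> fR; elim: k => [|k IHk].
  by apply: (ratfun_ext (ratfun_const 1)) => z; rewrite expr0.
by apply: (ratfun_ext (ratfunM fR IHk)) => z; rewrite exprS.
Qed.

Lemma ratfun_u : is_ratfun u.
Proof.
exists ('X - 1%:P), ('X + 1%:P); split=> [|z _]; last by rewrite !hornerE.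
exact/monic_neq0/monicXaddC.
Qed.

Lemma ratfun_uV : is_ratfun (fun z => (u z)^-1).
Proof.
exists ('X + 1%:P), ('X - 1%:P); split=> [|z _]; last by rewrite !hornerE /u invf_div.
exact/monic_neq0/monicXsubC.
Qed.

End RationalFunctions.

Section Cayley.
Variable R : realType.
Local Notation C := R[i].
Local Notation u := (@u R).
Implicit Types z : C.

Lemma u_neq0 z : z != 1 -> z != -1 -> u z != 0.
Proof.
move=> z1 z_1; rewrite mulf_neq0 ?invr_eq0 ?subr_eq0 //.
by rewrite -[1]opprK subr_eq0.
Qed.

Lemma near_u_neq0 : near 1 (fun z => u z != 0).
Proof.
apply: near_mono (near_and (near_neq 1) (near_lt 1 ltr01)) => z [z1 zr].
apply: u_neq0 z1 _; apply: contraTneq zr => ->.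
by rewrite -opprD normcN (_ : 1 + 1 = 2%:R) // normc_nat -leNgt ler1n.
Qed.

Lemma u_at_inv z : z != 0 -> u z^-1 = - u z.
Proof.
move=> z0; have E1 : z^-1 - 1 = (1 - z) / z by field.
have E2 : z^-1 + 1 = (1 + z) / z by field.
by rewrite /u E1 E2 invf_div mulrA divfK // -mulNr opprB [1 + z]addrC.
Qed.

End Cayley.

Section RationalMatrices.
Variable R : realType.
Local Notation C := R[i].
Local Notation u := (@u R).
Variable n : nat.
Local Notation Dmx := (@Dmx R n).
Local Notation TDprod := (@TDprod R n).
Local Notation TDprod_inv := (@TDprod_inv R n).
Implicit Types (F G : C -> 'M[C]_n) (phi : C -> C) (s : seq ('I_n * 'rV[C]_n)).

Definition ratmx F : Prop := forall i j, is_ratfun (fun z => F z i j).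

Lemma ratmx_const (A : 'M[C]_n) : ratmx (fun _ => A).
Proof. by move=> i j; apply: ratfun_const. Qed.

Lemma ratmx_mul F G : ratmx F -> ratmx G -> ratmx (fun z => F z *m G z).
Proof.
move=> FR GR i j.
have := ratfun_sum (index_enum 'I_n) (fun k => ratfunM (FR i k) (GR k j)).
by move=> FGR; apply: (ratfun_ext FGR) => z; rewrite mxE.
Qed.

Lemma ratmx_scale phi F : is_ratfun phi -> ratmx F -> ratmx (fun z => phi z *: F z).
Proof. by move=> phiR FR i j; apply: (ratfun_ext (ratfunM phiR (FR i j))) => z; rewrite mxE. Qed.

Lemma ratmx_Dmx phi i : is_ratfun phi -> ratmx (fun z => Dmx i (phi z)).
Proof.
move=> phiR p q; have [<-|pq] := eqVneq p q.
  have [->|pi] := eqVneq p i; first by apply: (ratfun_ext phiR) => z; rewrite mxE !eqxx.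
  by apply: (ratfun_ext (ratfun_const 1)) => z; rewrite mxE eqxx (negbTE pi).
by apply: (ratfun_ext (ratfun_const 0)) => z; rewrite mxE (negbTE pq).
Qed.

Lemma ratmx_TDprod phi s : is_ratfun phi -> ratmx (fun z => TDprod s (phi z)).
Proof.
move=> phiR; elim: s => [|p s IHs] /=; first exact: ratmx_const.
exact: ratmx_mul (ratmx_mul (ratmx_const _) (ratmx_Dmx _ phiR)) IHs.
Qed.

Lemma ratmx_TDprod_inv phi s : is_ratfun (fun z => (phi z)^-1) ->
  ratmx (fun z => TDprod_inv s (phi z)).
Proof.
move=> phiVR; elim: s => [|p s IHs] /=; first exact: ratmx_const.
exact: ratmx_mul IHs (ratmx_mul (ratmx_Dmx _ phiVR) (ratmx_const _)).
Qed.

Lemma GL_rat_Cmat k s : all pivot_nz s -> GL_rat (Cmat k s).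
Proof.
move=> s0; split.
  have uVkR : is_ratfun (fun z => u z ^- k).
    by apply: (ratfun_ext (ratfunX k (@ratfun_uV R))) => z; rewrite exprVn.
  exact: ratmx_scale uVkR (ratmx_TDprod s (@ratfun_u R)).
exists (fun z => u z ^+ k *: TDprod_inv s (u z)); split.
  exact: ratmx_scale (ratfunX k (@ratfun_u R)) (ratmx_TDprod_inv s (@ratfun_uV R)).
exists [:: 1; -1] => z; rewrite !inE negb_or => /andP[z1 z_1].
by rewrite Cmat_TDprod scale_TDprod_mulV // u_neq0.
Qed.

Lemma regular_at0_Cmat k s : all pivot_nz s -> regular_at 0 (Cmat k s).
Proof.
move=> s0; have u0 : u 0 != 0 by apply: u_neq0; rewrite eq_sym ?oppr_eq0 oner_eq0.
have := regular_at_scale_TDprod k (@multiplier_u0 R) (@multiplier_uV0 R) u0 s0.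
by move=> reg; apply: (regular_at_ext reg) => z _; rewrite Cmat_TDprod.
Qed.

Lemma regular_at_infty_Cmat k s : all pivot_nz s -> regular_at_infty (Cmat k s).
Proof.
move=> s0; have NuM : expansion_multiplier 0 (fun z => - u z).
  by apply: (multiplier_ext (multiplierM (@multiplier_const R 0 (-1)) (@multiplier_u0 R))) => z; rewrite mulN1r.
have NuVM : expansion_multiplier 0 (fun z => (- u z)^-1).
  by apply: (multiplier_ext (multiplierM (@multiplier_const R 0 (-1)) (@multiplier_uV0 R))) => z; rewrite invrN mulN1r.
have Nu0 : - u 0 != 0.
  by rewrite oppr_eq0; apply: u_neq0; rewrite eq_sym ?oppr_eq0 oner_eq0.
apply: (regular_at_ext (regular_at_scale_TDprod k NuM NuVM Nu0 s0)) => z z0.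
by rewrite Cmat_TDprod u_at_inv.
Qed.

End RationalMatrices.

Section Reduction.
Variable R : realType.
Local Notation C := R[i].
Local Notation u := (@u R).
Variable n : nat.
Local Notation Dmx := (@Dmx R n).
Local Notation Tmx := (@Tmx R n).
Local Notation TDprod := (@TDprod R n).
Implicit Types (F : C -> 'M[C]_n) (V : 'M[C]_n) (s : seq ('I_n * 'rV[C]_n)).

Lemma laurent_mx_expands_u F : laurent_mx 1 F ->
  exists M V, expands_mx 1 (fun z => u z ^+ M *: F z) V.
Proof.
move=> /laurent_mx_expands [M [V FV]]; exists M, ((1 + 1)^-1 ^+ M *: V).
have := expands_mx_scale (multiplierX M (@multiplier_addr1V1 R)) FV.
by move=> uFV; apply: (expands_mx_ext uFV) => z _; rewrite scalerA -exprMn mulrC.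
Qed.

Lemma expands_mx_reduce F V i (l : 'rV[C]_n) : expands_mx 1 F V -> l *m V = 0 ->
  exists V', expands_mx 1 (fun z => Dmx i (u z)^-1 *m (Tmx i l *m F z)) V'.
Proof.
move=> FV lV; have TFV := expands_mx_mull (Tmx i l) FV.
have /boolp.choice [V' HV'] : forall pq : 'I_n * 'I_n, exists v,
    expands_at 1 (fun z => (Dmx i (u z)^-1 *m (Tmx i l *m F z)) pq.1 pq.2) v.
  move=> [p q] /=; have [->|pi] := eqVneq p i.
    have := TFV i q; rewrite [(Tmx i l *m V) i q]Tmx_mulmx_row lV mxE.
    move=> /expands_at_mulVu [v fv]; exists v.
    by apply: (expands_at_ext fv) => z _; rewrite Dmx_mulmx !mxE eqxx.
  exists ((Tmx i l *m V) p q); apply: (expands_at_ext (TFV p q)) => z _.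
  by rewrite Dmx_mulmx !mxE (negbTE pi).
by exists (\matrix_(p, q) V' (p, q)) => p q; rewrite mxE; apply: HV'.
Qed.

Variables (M1 : C -> 'M[C]_n) (M : nat).

Definition reduction s F V : Prop :=
  [/\ all pivot_nz s, expands_mx 1 F V &
      near 1 (fun z => TDprod s (u z) *m F z = u z ^+ M *: M1 z)].

Lemma reduction_step s F V : reduction s F V -> V \notin unitmx ->
  exists s' F' V', size s' = (size s).+1 /\ reduction s' F' V'.
Proof.
move=> [s0 FV FM1] /singular_row_kernel [l [i [li0 lV]]].
have [V' F'V'] := expands_mx_reduce i FV lV.
exists (rcons s (i, Tinv_row i l)), (fun z => Dmx i (u z)^-1 *m (Tmx i l *m F z)), V'.
split; first by rewrite size_rcons.
split=> //; first by rewrite all_rcons s0 andbT /pivot_nz /= Tinv_row_pivot.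
apply: near_mono (near_and FM1 (near_u_neq0 R)) => z [<- uz0].
rewrite TDprod_rcons -!mulmxA /=; congr (_ *m _).
by rewrite (mulmxA (Dmx i _)) Dmx_mulV // mul1mx mulmxA Tmx_inv_rowK // mul1mx.
Qed.

Variables (B : C -> 'M[C]_n) (M' : nat).
Hypothesis M1B : near 1 (fun z => M1 z *m B z = 1%:M).
Hypothesis detB_bounded : bounded_near 1 (fun z => \det ((z - 1) ^+ M' *: B z)).

(* [det F] is a constant times [u ^- size s * det (u ^+ M *: M1)] and stays bounded
   near 1, whereas [det M1] has a pole of order at most [M' * n] at 1. *)
Lemma reduction_size s F V : reduction s F V -> (size s <= (M + M') * n)%N.
Proof.
move=> [s0 FV FM1]; rewrite leqNgt; apply/negP => s_big.
set d := (size s - (M + M') * n)%N.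
have d0 : (0 < d)%N by rewrite subn_gt0.
have sE : size s = (M * n + M' * n + d)%N by rewrite -mulnDl subnKC // ltnW.
set ka := \prod_(p <- s) \det (Tmx p.1 p.2).
pose g z := ka * (z + 1) ^- (M' * n + d) * \det (F z) * \det ((z - 1) ^+ M' *: B z).
apply: (@not_near_expr_mul_bounded _ 1 g d d0).
  have yB : bounded_near 1 (fun z : C => (z + 1) ^- (M' * n + d)).
    have := multiplierX (M' * n + d) (@multiplier_addr1V1 R) (expands_at_const 1 1).
    move=> /expands_at_bounded yB; apply: (bounded_near_ext yB) => z.
    by rewrite mulr1 exprVn.
  apply: bounded_nearM detB_bounded; apply: bounded_nearM (bounded_near_det (expands_mx_bounded FV)).
  exact: bounded_nearM (bounded_near_const 1 ka) yB.
apply: near_mono (near_and (near_and FM1 M1B) (near_u_neq0 R)) => z [[E1 E2] uz0].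
have y0 : z + 1 != 0 by apply: contra_neq uz0 => y0; rewrite /u y0 invr0 mulr0.
have d1 : ka * u z ^+ size s * \det (F z) = u z ^+ (M * n) * \det (M1 z).
  by rewrite exprM -detZ -E1 det_mulmx det_TDprod.
have d2 : \det (M1 z) * \det (B z) = 1.
  by have := congr1 determinant E2; rewrite det_mulmx det1.
apply: (mulfI (expf_neq0 (M * n) uz0)).
transitivity (u z ^+ (M * n) * \det (M1 z) * \det (B z)); last by rewrite -mulrA d2.
rewrite -d1 /g detZ -exprM sE /u !expr_div_n !exprD.
by field; rewrite !expf_neq0.
Qed.

Variable V0 : 'M[C]_n.
Hypothesis M1V0 : expands_mx 1 (fun z => u z ^+ M *: M1 z) V0.

Lemma reduction_terminates : exists s F V, reduction s F V /\ V \in unitmx.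
Proof.
suff [//|[s [F [V [sN red]]]]] : (exists s F V, reduction s F V /\ V \in unitmx) \/
    exists s F V, size s = ((M + M') * n).+1 /\ reduction s F V.
  by have := reduction_size red; rewrite sN ltnn.
elim: ((M + M') * n).+1 => [|k [reduced|[s [F [V [sk red]]]]]].
- right; exists [::], (fun z => u z ^+ M *: M1 z), V0; split=> //; split=> //.
  by apply: near_punctured => z _; rewrite mul1mx.
- by left.
- have [V_unit|V_sing] := boolP (V \in unitmx); first by left; exists s, F, V.
  have [s' [F' [V' [s's red']]]] := reduction_step red V_sing.
  by right; exists s', F', V'; rewrite s's sk.
Qed.

End Reduction.

Section Factorization.
Variable R : realType.
Local Notation C := R[i].
Local Notation u := (@u R).
Variable n : nat.
Local Notation TDprod := (@TDprod R n).
Local Notation TDprod_inv := (@TDprod_inv R n).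
Variables (M1 F : C -> 'M[C]_n) (V : 'M[C]_n) (M : nat) (s : seq ('I_n * 'rV[C]_n)).
Hypothesis M1_red : reduction M1 M s F V.

Lemma reduction_germ_eq : germ_eq 1 M1 (fun z => Cmat M s z *m F z).
Proof.
case: M1_red => _ _ FM1; apply/germ_eqE.
apply: near_mono (near_and FM1 (near_u_neq0 R)) => z [E uz0].
by rewrite Cmat_TDprod -scalemxAl E scalerA mulVf ?expf_neq0 ?scale1r.
Qed.

Lemma reduction_GL_laurent (B : C -> 'M[C]_n) : laurent_mx 1 B ->
  near 1 (fun z => M1 z *m B z = 1%:M) -> GL_laurent 1 F.
Proof.
case: M1_red => s0 FV FM1 BL M1B; split; first exact: expands_mx_laurent FV.
exists (fun z => u z ^- M *: (B z *m TDprod s (u z))); split.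
  by move=> i j; apply: (laurent_mx_scale_uVX M (laurent_mx_mulmx_TDprod s (@multiplier_u1 R) BL)).
apply/germ_eqE; apply: near_mono (near_and (near_and FM1 M1B) (near_u_neq0 R)).
move=> z [[E1 E2] uz0].
have -> : F z = TDprod_inv s (u z) *m (u z ^+ M *: M1 z).
  by rewrite -E1 mulmxA TDprod_invK // mul1mx.
rewrite -!scalemxAr -scalemxAl scalerA mulVf ?expf_neq0 // scale1r.
by rewrite !mulmxA -(mulmxA _ (M1 z)) E2 mulmx1 TDprod_invK.
Qed.

End Factorization.

Theorem mainTheorem13 (R : realType) (n : nat) (M1 : R[i] -> 'M[R[i]]_n) :
  GL_laurent 1 M1 ->
  exists (R1 : R[i] -> 'M[R[i]]_n) (k : nat) (s : seq ('I_n * 'rV[R[i]]_n)),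
    all (fun p => p.2 != 0) s /\
    GL_laurent 1 R1 /\ regular_at 1 R1 /\
    GL_rat (Cmat k s) /\ regular_at 0 (Cmat k s) /\ regular_at_infty (Cmat k s) /\
    germ_eq 1 M1 (fun z => Cmat k s z *m R1 z).
Proof.
move=> [M1L [B [BL /germ_eqE M1B]]].
have [M [V0 M1V0]] := laurent_mx_expands_u M1L.
have [M' [W BW]] := laurent_mx_expands BL.
have detB := bounded_near_det (expands_mx_bounded BW).
have [s [F [V [M1_red V_unit]]]] := reduction_terminates M1B detB M1V0.
have [s0 FV _] := M1_red.
exists F, M, s; split; first by apply: sub_all s0 => p; apply: contraNneq => ->; rewrite mxE.
split; first exact: (reduction_GL_laurent M1_red BL M1B).
split; first exact: regular_at_expands_mx FV V_unit.
split; first exact: GL_rat_Cmat.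
split; first exact: regular_at0_Cmat.
split; first exact: regular_at_infty_Cmat.
exact: reduction_germ_eq M1_red.
Qed.
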